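(* Let $\sim$ denote either $\cong$ or $\simeq$. If $\gamma\vdash\top\preceq A$ is derivable for some subtyping assumption $\gamma$, then $A\sim\top$.
   Context: Type expressions: fix a countably infinite set of type variables $X,Y,Z,\dots$. Pseudo type expressions are generated by $A::=X\mid A\to A\mid \bullet A\mid \mu X.A$ ($\mu$ binds $X$; $\alpha$-convertible expressions are identified; $\to$ associates to the right; $\bullet$ binds tighter than $\to$, which binds tighter than $\mu$). $A[B/X]$ denotes capture-avoiding substitution. $\top$ abbreviates $\mu X.\bullet X$, and $\bullet^n A$ denotes $A$ prefixed by $n$ copies of $\bullet$. The tail $t(A)$ is defined by $t(X)=X$, $t(A\to B)=t(B)$, $t(\bullet A)=\bullet t(A)$, $t(\mu X.A)=\mu X.t(A)$; it always has the form $\bullet^{m_0}\mu X_1.\bullet^{m_1}\mu X_2.\cdots\mu X_n.\bullet^{m_n}Y$. $A$ is a $\top$-variant iff $Y=X_i$ for some $1\le i\le n$ with $X_i\notin\{X_{i+1},\dots,X_n\}$ and $m_i+\dots+m_n\ge 1$. $A$ is proper in $X$ iff: a variable $Y$ is proper in $X$ iff $Y\neq X$; $\bullet A$ is always proper in $X$; $A\to B$ is proper in $X$ iff both $A,B$ are proper in $X$ or $B$ is a $\top$-variant; for $Y\ne X$, $\mu Y.A$ is proper in $X$ iff $A$ is proper in $X$ or $\mu Y.A$ is a $\top$-variant. Type expressions are the least set of pseudo type expressions containing all type variables, closed under $\to$ and $\bullet$, and containing $\mu X.A$ whenever it contains $A$ and $A$ is proper in $X$. Equality: $\cong$ is the least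 relation on type expressions such that: $A\cong A$; $A\cong B$ implies $B\cong A$; $A\cong B$ and $B\cong C$ imply $A\cong C$; $A\cong B$ implies $\bullet A\cong\bullet B$; $A\cong C$ and $B\cong D$ imply $A\to B\cong C\to D$; $A\to\top\cong\top$; $\mu X.A\cong A[\mu X.A/X]$; and if $A\cong C[A/X]$ with $C$ proper in $X$, then $A\cong\mu X.C$. $\simeq$ is the least relation satisfying the same closure conditions and additionally $\bullet(A\to B)\simeq\bullet A\to\bullet B$. Subtyping: a subtyping assumption $\gamma$ is a finite set of pairs $X\preceq Y$ of type variables in which each type variable occurs at most once; $FTV(\gamma)$ is the set of variables occurring in it. Judgments $\gamma\vdash A\preceq B$ are derived by the rules: $\gamma\cup\{X\preceq Y\}\vdash X\preceq Y$; $\gamma\vdash A\preceq\top$; from $A\simeq B$ infer $\gamma\vdash A\preceq B$; from $\gamma_1\vdash A\preceq B$ and $\gamma_2\vdash B\preceq C$ infer $\gamma_1\cup\gamma_2\vdash A\preceq C$; from $\gamma\vdash A\preceq B$ infer $\gamma\vdash\bullet A\preceq\bullet B$; from $\gamma_1\vdash A'\preceq A$ and $\gamma_2\vdash B\preceq B'$ infer $\gamma_1\cup\gamma_2\vdash A\to B\preceq A'\to B'$; from $\gamma\cup\{X\preceq Y\}\vdash A\preceq B$ infer $\gamma\vdash\mu X.A\preceq\mu Y.B$, provided $X\notin FTV(\gamma)\cup FTV(B)$, $Y\notin FTV(\gamma)\cup FTV(A)$, $A$ is proper in $X$ and $B$ is proper in $Y$; and $\gamma\vdash A\preceq\bullet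 A$. All sets $\gamma\cup\{X\preceq Y\}$, $\gamma_1\cup\gamma_2$ must be well-formed subtyping assumptions. $A\preceq B$ means $\{\}\vdash A\preceq B$ is derivable. *)

(* Locally nameless representation of the (pseudo) type
   expressions: free type variables are names (nat, a countably infinite
   set), variables bound by mu are de Bruijn indices.  Alpha-convertible
   expressions are thus identified syntactically. *)
From Stdlib Require Import List Arith.
Import ListNotations.

Inductive ty : Type :=
| tfvar (X : nat)
| tbvar (i : nat)
| tarr (A B : ty)
| tbul (A : ty)
| tmu (A : ty).            (* mu X. A, body with index 0 for X *)

(* opening: replace bound index k by u (capture-avoiding substitution
   A[u/X] when A = open a X) *)
Fixpoint open_rec (k : nat) (u : ty) (t : ty) : ty :=
  match t with
  | tfvar X => tfvar X
  | tbvar i => if Nat.eqb i k then u else tbvar i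
  | tarr A B => tarr (open_rec k u A) (open_rec k u B)
  | tbul A => tbul (open_rec k u A)
  | tmu A => tmu (open_rec (S k) u A)
  end.

Definition open (t u : ty) : ty := open_rec 0 u t.

Fixpoint fv (t : ty) : list nat :=
  match t with
  | tfvar X => [X]
  | tbvar _ => []
  | tarr A B => fv A ++ fv B
  | tbul A => fv A
  | tmu A => fv A
  end.

Definition top : ty := tmu (tbul (tbvar 0)).

(* The tail t(A) is bullet^m0 mu X1. ... mu Xn. bullet^mn Y.
   tinfo computes, bottom-up along the tail, whether the final variable Y is
   free, or bound (relative index, and whether a bullet has been passed since
   Y), or already resolved to its binder X_i (with the flag recording
   m_i + ... + m_n >= 1). *)
Inductive tres : Type :=
| TFree
| TBound (k : nat) (g : bool)
| TResolved (g : bool).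

Fixpoint tinfo (t : ty) : tres :=
  match t with
  | tfvar _ => TFree
  | tbvar k => TBound k false
  | tarr _ B => tinfo B
  | tbul A => match tinfo A with
              | TBound k _ => TBound k true
              | r => r
              end
  | tmu A => match tinfo A with
             | TBound 0 g => TResolved g
             | TBound (S k) g => TBound k g
             | r => r
             end
  end.

Definition topvariant (t : ty) : Prop := tinfo t = TResolved true.

(* A is proper in the (free) variable X.  Bound variables are always distinct
   from X (they can be renamed apart), hence proper. *)
Fixpoint proper (X : nat) (t : ty) : Prop :=
  match t with
  | tfvar Y => Y <> X
  | tbvar _ => True
  | tbul _ => True
  | tarr A B => (proper X A /\ proper X B) \/ topvariant B
  | tmu A => proper X A \/ topvariant (tmu A)
  end.

Inductive texp : ty -> Prop :=
| te_var X : texp (tfvar X)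
| te_arr A B : texp A -> texp B -> texp (tarr A B)
| te_bul A : texp A -> texp (tbul A)
| te_mu A :
    (forall X, ~ In X (fv A) ->
       texp (open A (tfvar X)) /\ proper X (open A (tfvar X))) ->
    texp (tmu A).

(* Equality.  teq false is the relation ≅, teq true is ≃ (which additionally
   has bullet (A -> B) ≃ bullet A -> bullet B). *)
Inductive teq (d : bool) : ty -> ty -> Prop :=
| teq_refl A : texp A -> teq d A A
| teq_sym A B : teq d A B -> teq d B A
| teq_trans A B C : teq d A B -> teq d B C -> teq d A C
| teq_bul A B : teq d A B -> teq d (tbul A) (tbul B)
| teq_arr A B C D : teq d A C -> teq d B D -> teq d (tarr A B) (tarr C D)
| teq_arrtop A : texp A -> teq d (tarr A top) top
| teq_unfold A : texp (tmu A) -> teq d (tmu A) (open A (tmu A))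
| teq_contract A C :
    texp (tmu C) ->                 (* C is proper in X, mu X.C a type expr *)
    teq d A (open C A) ->
    teq d A (tmu C)
| teq_dist A B : d = true -> texp A -> texp B ->
    teq d (tbul (tarr A B)) (tarr (tbul A) (tbul B)).

Notation tcong := (teq false).
Notation tsim := (teq true).

(* Subtyping assumptions: finite sets of pairs X ≼ Y, represented by lists;
   well-formed iff each variable occurs at most once. *)
Definition ftv (g : list (nat * nat)) : list nat :=
  flat_map (fun p => [fst p; snd p]) g.

Definition wfg (g : list (nat * nat)) : Prop := NoDup (ftv g).

Definition is_union (g g1 g2 : list (nat * nat)) : Prop :=
  forall p, In p g <-> In p g1 \/ In p g2.

(* Subtyping judgments  g ⊢ A ≼ B.  Every context occurring is well-formed;
   judgments only depend on the set of pairs in g. *)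
Inductive sub : list (nat * nat) -> ty -> ty -> Prop :=
| sub_hyp g X Y : wfg g -> In (X, Y) g -> sub g (tfvar X) (tfvar Y)
| sub_top g A : wfg g -> texp A -> sub g A top
| sub_eq g A B : wfg g -> tsim A B -> sub g A B
| sub_trans g g1 g2 A B C :
    sub g1 A B -> sub g2 B C -> wfg g -> is_union g g1 g2 -> sub g A C
| sub_bul g A B : sub g A B -> sub g (tbul A) (tbul B)
| sub_arr g g1 g2 A A' B B' :
    sub g1 A' A -> sub g2 B B' -> wfg g -> is_union g g1 g2 ->
    sub g (tarr A B) (tarr A' B')
| sub_mu g g' a b X Y :
    (* mu a = mu X.A with A = open a X, mu b = mu Y.B with B = open b Y *)
    ~ In X (fv a) -> ~ In Y (fv b) ->
    ~ In X (ftv g) -> ~ In X (fv (open b (tfvar Y))) ->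
    ~ In Y (ftv g) -> ~ In Y (fv (open a (tfvar X))) ->
    proper X (open a (tfvar X)) -> proper Y (open b (tfvar Y)) ->
    wfg g' -> is_union g' g [(X, Y)] ->
    sub g' (open a (tfvar X)) (open b (tfvar Y)) ->
    sub g (tmu a) (tmu b)
| sub_later g A : wfg g -> texp A -> sub g A (tbul A).

(* The tail of a type is what remains along the spine of arrow codomains,
   bullets and mus: either a free variable under some bullets, or "infinite"
   when a mu on the spine binds the tail variable, as in top.  The tail is
   invariant under both equalities; for the contraction rule this uses that
   a proper body puts at least one bullet above its bound variable.  Along a
   subtyping derivation an infinite tail stays infinite: the only delicate
   rule is the mu rule, where X and Y are fresh for gamma, so from X the pairs
   of gamma u {X <= Y} only lead to X or Y, i.e. to a tail bound by a mu
   again.  Conversely a type expression with an infinite tail is congruent to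
   top, by induction on its size using A -> top = top, bullet top = top and,
   at the binding mu, the contraction rule with top as the fixed point. *)
From Stdlib Require Import List Arith Lia Wf_nat Relations.
Import ListNotations.

Fixpoint size (t : ty) : nat :=
  match t with
  | tfvar _ | tbvar _ => 1
  | tarr A B => S (size A + size B)
  | tbul A | tmu A => S (size A)
  end.

Lemma size_ind (P : ty -> Prop) :
  (forall t, (forall t', size t' < size t -> P t') -> P t) -> forall t, P t.
Proof. exact (induction_ltof1 ty size P). Qed.

Lemma size_open_rec_fvar k X t : size (open_rec k (tfvar X) t) = size t.
Proof.
  revert k; induction t; intros k; simpl; auto.
  destruct (Nat.eqb i k); reflexivity.
Qed.

Lemma size_open_mu A X : size (open A (tfvar X)) < size (tmu A).
Proof. unfold open; rewrite size_open_rec_fvar; simpl; lia. Qed.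

Definition fresh (l : list nat) : nat := S (fold_right Nat.max 0 l).

Lemma fresh_spec l : ~ In (fresh l) l.
Proof.
  assert (Hle : forall x, In x l -> x <= fold_right Nat.max 0 l).
  { induction l as [|y l IH]; simpl; intros x Hx; [contradiction|].
    destruct Hx as [->|Hx]; [lia|]. specialize (IH x Hx); lia. }
  intros H; apply Hle in H; unfold fresh in H; lia.
Qed.

Lemma fv_open_rec_sub t k u Z : In Z (fv t) -> In Z (fv (open_rec k u t)).
Proof.
  revert k; induction t; simpl; intros k H; try contradiction; auto.
  apply in_app_or in H; apply in_or_app; destruct H; auto.
Qed.

Lemma fv_open_rec t k u Z :
  In Z (fv (open_rec k u t)) -> In Z (fv t) \/ In Z (fv u).
Proof.
  revert k; induction t; simpl; intros k H; try contradiction; eauto.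
  - destruct (Nat.eqb i k); simpl in *; auto.
  - apply in_app_or in H; destruct H as [H|H];
      [apply IHt1 in H|apply IHt2 in H]; destruct H; auto;
      left; apply in_or_app; auto.
Qed.

Definition lc (u : ty) : Prop := forall k w, open_rec k w u = u.

Lemma open_rec_neq_fixed t i j u v : i <> j ->
  open_rec i u (open_rec j v t) = open_rec j v t -> open_rec i u t = t.
Proof.
  revert i j; induction t; simpl; intros i' j Hij H; auto.
  - destruct (Nat.eqb_spec i j); simpl in H; destruct (Nat.eqb_spec i i');
      congruence.
  - injection H; intros; f_equal; eauto.
  - injection H; intros; f_equal; eauto.
  - injection H; intros; f_equal; eapply IHt; [|eauto]; lia.
Qed.

Lemma texp_lc t : texp t -> lc t.
Proof.
  induction t as [t IH] using size_ind; intros Ht k w.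
  inversion Ht as [X|A B HA HB|A HA|A Hmu]; subst; simpl.
  - reflexivity.
  - rewrite (IH A), (IH B); auto; simpl; lia.
  - rewrite (IH A); auto; simpl; lia.
  - set (X := fresh (fv A)); destruct (Hmu X (fresh_spec _)) as [HX _].
    f_equal; apply open_rec_neq_fixed with (j := 0) (v := tfvar X); [lia|].
    apply (IH _ (size_open_mu A X) HX).
Qed.

Lemma texp_top : texp top.
Proof.
  constructor; intros X _; unfold open; simpl.
  split; [constructor; constructor|exact I].
Qed.

Lemma teq_top_bul d : teq d top (tbul top).
Proof. exact (teq_unfold d (tbul (tbvar 0)) texp_top). Qed.

Lemma tcong_teq d A B : tcong A B -> teq d A B.
Proof. induction 1; try (econstructor; eauto; fail); discriminate. Qed.

Fixpoint ssubst (s : nat -> ty) (t : ty) : ty :=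
  match t with
  | tfvar X => s X
  | tbvar i => tbvar i
  | tarr A B => tarr (ssubst s A) (ssubst s B)
  | tbul A => tbul (ssubst s A)
  | tmu A => tmu (ssubst s A)
  end.

Definition update (s : nat -> ty) (X : nat) (u : ty) : nat -> ty :=
  fun Z => if Nat.eqb Z X then u else s Z.

Lemma ssubst_id t : ssubst tfvar t = t.
Proof. induction t; simpl; congruence. Qed.

Lemma ssubst_ext s s' t :
  (forall Z, In Z (fv t) -> s Z = s' Z) -> ssubst s t = ssubst s' t.
Proof.
  induction t; simpl; intros H; f_equal; auto;
    [apply IHt1|apply IHt2]; intros Z HZ; apply H, in_or_app; auto.
Qed.

Lemma ssubst_open_rec s k v t : (forall Z, lc (s Z)) ->
  ssubst s (open_rec k v t) = open_rec k (ssubst s v) (ssubst s t).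
Proof.
  intros Hs; revert k; induction t; intros k; simpl; f_equal; auto.
  - symmetry; apply Hs.
  - destruct (Nat.eqb i k); reflexivity.
Qed.

Lemma ssubst_update_open s A X u : (forall Z, lc (s Z)) -> lc u ->
  ~ In X (fv A) -> ssubst (update s X u) (open A (tfvar X)) = open (ssubst s A) u.
Proof.
  intros Hs Hu HX; unfold open; rewrite ssubst_open_rec.
  - simpl; unfold update at 1; rewrite Nat.eqb_refl; f_equal.
    apply ssubst_ext; intros Z HZ; unfold update.
    destruct (Nat.eqb_spec Z X); [subst; contradiction|reflexivity].
  - intros Z; unfold update; destruct (Nat.eqb Z X); auto.
Qed.

Lemma fv_ssubst s t Z Y : In Z (fv t) -> In Y (fv (s Z)) -> In Y (fv (ssubst s t)).
Proof.
  induction t; simpl; intros HZ HY; try contradiction; auto.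
  - destruct HZ as [->|[]]; exact HY.
  - apply in_or_app; apply in_app_or in HZ; destruct HZ; auto.
Qed.

Lemma tinfo_ssubst s t : tinfo t <> TFree -> tinfo (ssubst s t) = tinfo t.
Proof.
  induction t; simpl; intros H; auto; [congruence| |].
  - destruct (tinfo t); try congruence; rewrite IHt; congruence.
  - destruct (tinfo t) as [|[|k] g|g]; try congruence; rewrite IHt; congruence.
Qed.

Lemma topvariant_ssubst s t : topvariant t -> topvariant (ssubst s t).
Proof. unfold topvariant; intros H; rewrite tinfo_ssubst; congruence. Qed.

Lemma proper_notin Y u : ~ In Y (fv u) -> proper Y u.
Proof.
  induction u; simpl; intros H; auto.
  left; split; [apply IHu1|apply IHu2]; intro; apply H, in_or_app; auto.
Qed.

Lemma proper_ssubst s W Y T : proper W T -> s W = tfvar Y ->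
  (forall Z, In Z (fv T) -> Z <> W -> ~ In Y (fv (s Z))) ->
  proper Y (ssubst s T).
Proof.
  intros HT HW Hs; induction T; simpl in *; auto.
  - apply proper_notin, Hs; auto.
  - destruct HT as [[H1 H2]|Htv]; [left; split|right; apply topvariant_ssubst; auto].
    + apply IHT1; auto; intros Z HZ; apply Hs, in_or_app; auto.
    + apply IHT2; auto; intros Z HZ; apply Hs, in_or_app; auto.
  - destruct HT as [H|Htv]; [left; auto|right].
    exact (topvariant_ssubst s (tmu T) Htv).
Qed.

Lemma texp_ssubst s t : (forall Z, texp (s Z)) -> texp t -> texp (ssubst s t).
Proof.
  revert s; induction t as [t IH] using size_ind; intros s Hs Ht.
  assert (Hslc : forall Z, lc (s Z)) by (intros Z; apply texp_lc, Hs).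
  inversion Ht as [X|A B HA HB|A HA|A Hmu]; subst; simpl.
  - apply Hs.
  - constructor; apply IH; auto; simpl; lia.
  - constructor; apply IH; auto; simpl; lia.
  - constructor; intros Y HY.
    set (W := fresh (fv A)); assert (HW := fresh_spec (fv A)); fold W in HW.
    destruct (Hmu W HW) as [HtW HpW].
    rewrite <- (ssubst_update_open s A W (tfvar Y)) by (auto; apply texp_lc; constructor).
    split.
    + apply IH; auto using size_open_mu.
      intros Z; unfold update; destruct (Nat.eqb Z W); auto; constructor.
    + apply proper_ssubst with W; auto.
      * unfold update; rewrite Nat.eqb_refl; reflexivity.
      * intros Z HZ HZW; unfold update.
        destruct (Nat.eqb_spec Z W); [contradiction|].
        intro HYZ; apply HY, fv_ssubst with Z; auto.
        destruct (fv_open_rec _ _ _ _ HZ) as [H|[H|[]]]; [exact H|congruence].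
Qed.

(* [TailFree n Y]: the tail is bullet^n Y with Y free; [TailBound k n]: it is
   bullet^n of the bound index k; [TailInf]: a mu of the spine binds it. *)
Inductive tail_shape : Type :=
| TailFree (n Y : nat)
| TailInf
| TailBound (k n : nat).

Definition tail_bul (r : tail_shape) : tail_shape :=
  match r with
  | TailFree n Y => TailFree (S n) Y
  | TailInf => TailInf
  | TailBound k n => TailBound k (S n)
  end.

Definition tail_mu (r : tail_shape) : tail_shape :=
  match r with
  | TailBound 0 _ => TailInf
  | TailBound (S k) n => TailBound k n
  | r => r
  end.

Fixpoint tail_of (t : ty) : tail_shape :=
  match t with
  | tfvar Y => TailFree 0 Y
  | tbvar k => TailBound k 0
  | tarr _ B => tail_of B
  | tbul A => tail_bul (tail_of A)
  | tmu A => tail_mu (tail_of A)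
  end.

Definition tail_bullets (m : nat) (r : tail_shape) : tail_shape :=
  match r with
  | TailFree n Y => TailFree (m + n) Y
  | TailInf => TailInf
  | TailBound k n => TailBound k (m + n)
  end.

Definition closed_tail (r : tail_shape) : Prop :=
  match r with TailBound _ _ => False | _ => True end.

Lemma tail_open_rec t k u : closed_tail (tail_of u) ->
  tail_of (open_rec k u t) =
  match tail_of t with
  | TailBound j n => if Nat.eqb j k then tail_bullets n (tail_of u) else TailBound j n
  | r => r
  end.
Proof.
  revert k; induction t; simpl; intros k Hu; auto.
  - destruct (Nat.eqb i k); [destruct (tail_of u)|]; reflexivity.
  - rewrite IHt by auto; destruct (tail_of t) as [| |j n]; simpl; auto.
    destruct (Nat.eqb j k); simpl; auto; destruct (tail_of u); reflexivity.
  - rewrite IHt by auto; destruct (tail_of t) as [| |[|j] n]; simpl; auto.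
    destruct (Nat.eqb j k); simpl; auto; destruct (tail_of u); simpl in *; tauto.
Qed.

Definition tail_open (r : tail_shape) (Y : nat) : tail_shape :=
  match r with TailBound 0 n => TailFree n Y | r => r end.

Lemma tail_open_var t Y : tail_of (open t (tfvar Y)) = tail_open (tail_of t) Y.
Proof.
  unfold open; rewrite tail_open_rec by exact I.
  destruct (tail_of t) as [| |[|j] n]; simpl; auto; rewrite Nat.add_0_r; auto.
Qed.

Lemma tail_free_in_fv t n Z : tail_of t = TailFree n Z -> In Z (fv t).
Proof.
  revert n; induction t; simpl; intros n H.
  - injection H; auto.
  - discriminate.
  - apply in_or_app; right; eauto.
  - destruct (tail_of t); simpl in H; try discriminate.
    injection H; intros; subst; eauto.
  - destruct (tail_of t) as [| |[|j] m]; simpl in H; try discriminate.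
    injection H; intros; subst; eauto.
Qed.

Lemma texp_closed_tail t : texp t -> closed_tail (tail_of t).
Proof.
  induction t as [t IH] using size_ind; intros Ht.
  inversion Ht as [X|A B HA HB|A HA|A Hmu]; subst; simpl.
  - exact I.
  - apply IH; auto; simpl; lia.
  - assert (H := IH A ltac:(simpl; lia) HA); destruct (tail_of A); simpl in *; auto.
  - set (X := fresh (fv A)); destruct (Hmu X (fresh_spec _)) as [HX _].
    assert (H := IH _ (size_open_mu A X) HX); rewrite tail_open_var in H.
    destruct (tail_of A) as [| |[|j] n]; simpl in *; auto.
Qed.

Lemma tinfo_tail_free t n Z : tail_of t = TailFree n Z -> tinfo t = TFree.
Proof.
  revert n; induction t; simpl; intros n H; try discriminate; eauto.
  - destruct (tail_of t) eqn:E; inversion H; subst.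
    rewrite (IHt _ eq_refl); reflexivity.
  - destruct (tail_of t) as [| |[|j] m] eqn:E; inversion H; subst.
    rewrite (IHt _ eq_refl); reflexivity.
Qed.

Lemma proper_tail X t : proper X t -> tail_of t <> TailFree 0 X.
Proof.
  induction t; simpl; intros H.
  - congruence.
  - discriminate.
  - destruct H as [[]|H]; auto; intro E; unfold topvariant in H.
    rewrite (tinfo_tail_free _ _ _ E) in H; discriminate.
  - destruct (tail_of t); discriminate.
  - destruct H as [H|H].
    + specialize (IHt H); destruct (tail_of t) as [| |[|j] m]; simpl; congruence.
    + intro E; unfold topvariant in H.
      rewrite (tinfo_tail_free (tmu t) 0 X E) in H; discriminate.
Qed.

(* [TailBound 0 0] would be a body [mu X. X]; properness rules it out. *)
Lemma texp_mu_tail C : texp (tmu C) ->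
  (forall k n, tail_of C <> TailBound (S k) n) /\ tail_of C <> TailBound 0 0.
Proof.
  intros H; inversion H as [| | |A Hmu]; subst.
  set (X := fresh (fv C)); destruct (Hmu X (fresh_spec _)) as [Ht Hp].
  assert (Hc := texp_closed_tail _ Ht); assert (Hn := proper_tail _ _ Hp).
  rewrite tail_open_var in Hc, Hn; split.
  - intros k n E; rewrite E in Hc; exact Hc.
  - intros E; rewrite E in Hn; auto.
Qed.

Lemma teq_tail d A B : teq d A B -> tail_of A = tail_of B /\ closed_tail (tail_of A).
Proof.
  induction 1.
  - split; auto using texp_closed_tail.
  - destruct IHteq as [e c]; split; [auto|rewrite <- e; auto].
  - destruct IHteq1 as [e1 c1], IHteq2 as [e2 c2]; split; congruence.
  - destruct IHteq as [e c]; simpl; rewrite e; split; auto.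
    rewrite <- e; destruct (tail_of A); simpl in *; auto.
  - destruct IHteq2; simpl; auto.
  - split; [reflexivity|exact I].
  - assert (Hc := texp_closed_tail _ H); destruct (texp_mu_tail _ H) as [M _].
    unfold open; rewrite tail_open_rec by auto; split; auto.
    simpl in *; destruct (tail_of A) as [| |[|j] m] eqn:E; simpl; auto.
    exfalso; eapply M; eauto.
  - (* contractivity: folding cannot absorb bullets, as [n + m <> n] for [m <> 0] *)
    assert (Hc := texp_closed_tail _ H); destruct (texp_mu_tail _ H) as [M1 M2].
    destruct IHteq as [e c]; split; auto.
    unfold open in e; rewrite tail_open_rec in e by auto.
    simpl; destruct (tail_of C) as [| |[|j] m] eqn:E; simpl in *; auto.
    + destruct (tail_of A); simpl in *; try tauto.
      injection e; intros; destruct m; [congruence|lia].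
    + exfalso; eapply M1; eauto.
  - assert (Hn := texp_closed_tail _ H1); simpl; split; auto.
    destruct (tail_of B); simpl in *; auto.
Qed.

Definition reach (g : list (nat * nat)) : relation nat :=
  clos_refl_trans nat (fun X Y => In (X, Y) g).

Lemma reach_incl g h X Y :
  (forall p, In p g -> In p h) -> reach g X Y -> reach h X Y.
Proof.
  intros Hgh; induction 1; [apply rt_step; auto|apply rt_refl|eapply rt_trans; eauto].
Qed.

Lemma in_ftv g X Y : In (X, Y) g -> In X (ftv g) /\ In Y (ftv g).
Proof. unfold ftv; intros; split; apply in_flat_map; exists (X, Y); simpl; auto. Qed.

Section FreshPair.

Variables (g g' : list (nat * nat)) (X Y : nat).
Hypotheses (HXg : ~ In X (ftv g)) (HYg : ~ In Y (ftv g))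
  (Hunion : is_union g' g [(X, Y)]).

Lemma reach_from_fresh_pair W Z : reach g' W Z -> W = X \/ W = Y -> Z = X \/ Z = Y.
Proof.
  induction 1 as [W Z Hin| |]; auto.
  intros HW; apply Hunion in Hin; destruct Hin as [Hin|[Hin|[]]].
  - apply in_ftv in Hin; destruct HW; subst; tauto.
  - injection Hin; auto.
Qed.

Lemma reach_avoiding_fresh_pair Z Z' :
  reach g' Z Z' -> Z' <> X -> Z' <> Y -> reach g Z Z'.
Proof.
  induction 1 as [Z Z' Hin|Z|Z Z1 Z' H1 IH1 H2 IH2]; intros HX HY.
  - apply rt_step; apply Hunion in Hin; destruct Hin as [Hin|[Hin|[]]]; auto.
    injection Hin; intros; congruence.
  - apply rt_refl.
  - destruct (Nat.eq_dec Z1 X) as [->|HX1]; [|destruct (Nat.eq_dec Z1 Y) as [->|HY1]].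
    + destruct (reach_from_fresh_pair _ _ H2 (or_introl eq_refl)); congruence.
    + destruct (reach_from_fresh_pair _ _ H2 (or_intror eq_refl)); congruence.
    + apply rt_trans with Z1; [apply IH1|apply IH2]; auto.
Qed.

End FreshPair.

(* Bound tails on the left are left unconstrained: they do not arise from
   type expressions. *)
Definition tail_le (g : list (nat * nat)) (r s : tail_shape) : Prop :=
  match r, s with
  | TailInf, _ => s = TailInf
  | TailFree _ Z, TailFree _ Z' => reach g Z Z'
  | TailFree _ _, TailInf => True
  | TailFree _ _, TailBound _ _ => False
  | TailBound _ _, _ => True
  end.

Lemma tail_le_refl g r : tail_le g r r.
Proof. destruct r; simpl; auto; apply rt_refl. Qed.

Lemma tail_le_incl g h r s :
  (forall p, In p g -> In p h) -> tail_le g r s -> tail_le h r s.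
Proof. destruct r, s; simpl; eauto using reach_incl. Qed.

Lemma tail_le_trans g r s t : tail_le g r s -> tail_le g s t -> tail_le g r t.
Proof.
  destruct r, s; simpl; intros H1 H2; subst; try discriminate; try contradiction; auto.
  destruct t; simpl in *; auto; eapply rt_trans; eauto.
Qed.

Lemma tail_le_bul g r s : tail_le g r s -> tail_le g (tail_bul r) (tail_bul s).
Proof. destruct r, s; simpl; intros; try discriminate; auto. Qed.

Lemma tail_le_bul_r g r : tail_le g r (tail_bul r).
Proof. destruct r; simpl; auto; apply rt_refl. Qed.

Lemma tail_le_mu g g' X Y ra rb :
  ~ In X (ftv g) -> ~ In Y (ftv g) -> is_union g' g [(X, Y)] ->
  (forall n Z, rb = TailFree n Z -> Z <> X /\ Z <> Y) ->
  tail_le g' (tail_open ra X) (tail_open rb Y) -> tail_le g (tail_mu ra) (tail_mu rb).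
Proof.
  intros HXg HYg Hunion Hb H.
  destruct ra as [n Z| |[|k] n], rb as [m W| |[|j] m]; simpl in *;
    try discriminate; try contradiction; auto; destruct (Hb m W eq_refl).
  - apply (reach_avoiding_fresh_pair g g' X Y); auto.
  - destruct (reach_from_fresh_pair g g' X Y HXg HYg Hunion X W H); auto; congruence.
Qed.

Lemma sub_tail g A B : sub g A B -> tail_le g (tail_of A) (tail_of B).
Proof.
  induction 1 as [g X Y _ Hin|g A _ _|g A B _ Heq
    |g g1 g2 A B C _ IH1 _ IH2 _ U|g A B _ IH
    |g g1 g2 A A' B B' _ _ _ IH _ U
    |g g' a b X Y HXa HYb HXg HXb HYg HYa _ _ _ U _ IH|g A _ _].
  - apply rt_step; exact Hin.
  - destruct (tail_of A); simpl; auto.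
  - rewrite (proj1 (teq_tail _ _ _ Heq)); apply tail_le_refl.
  - apply tail_le_trans with (tail_of B);
      [apply tail_le_incl with g1|apply tail_le_incl with g2]; auto;
      intros p Hp; apply U; auto.
  - apply tail_le_bul; exact IH.
  - eapply tail_le_incl; [|exact IH]; intros p Hp; apply U; auto.
  - rewrite !tail_open_var in IH; apply (tail_le_mu g g' X Y); auto.
    intros n Z E; apply tail_free_in_fv in E; split; intros ->.
    + apply HXb, fv_open_rec_sub; exact E.
    + contradiction.
  - apply tail_le_bul_r.
Qed.

Definition tail_reaches_top (s : nat -> ty) (r : tail_shape) : Prop :=
  match r with
  | TailFree _ Y => s Y = top
  | TailInf => True
  | TailBound _ _ => False
  end.

Lemma ssubst_tail_top_cong t s : (forall Z, texp (s Z)) -> texp t ->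
  tail_reaches_top s (tail_of t) -> tcong (ssubst s t) top.
Proof.
  revert s; induction t as [t IH] using size_ind; intros s Hs Ht Htop.
  inversion Ht as [X|A B HA HB|A HA|A Hmu]; subst; simpl in *.
  - rewrite Htop; apply teq_refl, texp_top.
  - apply teq_trans with (tarr (ssubst s A) top).
    + apply teq_arr; [apply teq_refl, texp_ssubst; auto|apply IH; auto; simpl; lia].
    + apply teq_arrtop, texp_ssubst; auto.
  - apply teq_trans with (tbul top); [|apply teq_sym, teq_top_bul].
    apply teq_bul, IH; auto.
    destruct (tail_of A); simpl in *; auto.
  - (* [top] solves the fixed-point equation of the body *)
    apply teq_sym, teq_contract; [exact (texp_ssubst s _ Hs Ht)|apply teq_sym].
    set (Y := fresh (fv A)); assert (HY := fresh_spec (fv A)); fold Y in HY.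
    destruct (Hmu Y HY) as [HtY _].
    rewrite <- (ssubst_update_open s A Y top) by auto using texp_lc, texp_top.
    apply IH; auto using size_open_mu.
    + intros Z; unfold update; destruct (Nat.eqb Z Y); auto using texp_top.
    + rewrite tail_open_var; unfold update.
      destruct (tail_of A) as [n Z| |[|k] n]; simpl in *; auto.
      * destruct (Nat.eqb Z Y); auto.
      * rewrite Nat.eqb_refl; reflexivity.
Qed.

Theorem proposition5 (g : list (nat * nat)) (A : ty) :
  texp A -> sub g top A -> tcong A top /\ tsim A top.
Proof.
  intros HA Hsub.
  assert (Hinf : tail_of A = TailInf) by exact (sub_tail _ _ _ Hsub).
  assert (Hcong : tcong A top).
  { rewrite <- (ssubst_id A); apply ssubst_tail_top_cong; auto using te_var.
    rewrite Hinf; exact I. }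
  split; auto using tcong_teq.
Qed.
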